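(* Let $n$ be a positive integer and let $i,k\in\{1,\ldots,n\}$. Suppose that $H\sim\text{Hyp}(n,i,k)$ satisfies $\mathbb{E}(H)\in [1,\min\{i,k\}-2]$ and $\frac{(n-i)(n-k)}{n}> 1$. Then \[ \mathbb{P}(H\ge \mathbb{E}(H)) \,\ge\,\frac{e^{-1/8}}{4\sqrt{2}} \cdot \sqrt{\frac{n-1}{n}} \cdot\frac{ \sqrt{\text{Var}(H)} }{1 + \sqrt{1+ \frac{n-1}{n-k}\cdot\text{Var}(H)}}. \]
   Context: $\text{Hyp}(n,i,k)$ denotes the hypergeometric distribution: the number of black marbles in a sample without replacement of size $k$ from an urn with $i$ black and $n-i$ white marbles, i.e. $\mathbb{P}(H=j)=\binom{i}{j}\binom{n-i}{k-j}/\binom{n}{k}$ for $j\in\{\max\{0,k-(n-i)\},\ldots,\min\{k,i\}\}$. One has $\mathbb{E}(H)=ik/n$ and $\text{Var}(H)=k\cdot\frac{i}{n}\cdot\frac{n-i}{n}\cdot\frac{n-k}{n-1}$. *)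

(* concrete reals R; binomial coefficients from Stdlib Arith are
   avoided because of truncated subtraction, we define our own. *)
From Stdlib Require Import Reals Lra Lia.
Open Scope R_scope.

(* binomial coefficient on nat, with binom a b = 0 when b > a *)
Fixpoint binom (a b : nat) : nat :=
  match a, b with
  | _, O => 1%nat
  | O, S _ => 0%nat
  | S a', S b' => (binom a' b' + binom a' b)%nat
  end.

Definition hyp_pmf (n i k j : nat) : R :=
  if (j <=? k)%nat then
    INR (binom i j) * INR (binom (n - i) (k - j)) / INR (binom n k)
  else 0.

Definition hyp_mean (n i k : nat) : R :=
  sum_f_R0 (fun j => INR j * hyp_pmf n i k j) k.

Definition hyp_var (n i k : nat) : R :=
  sum_f_R0 (fun j => (INR j - hyp_mean n i k) ^ 2 * hyp_pmf n i k j) k.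

Definition hyp_prob_ge_mean (n i k : nat) : R :=
  sum_f_R0 (fun j => if Rle_dec (hyp_mean n i k) (INR j)
                     then hyp_pmf n i k j else 0) k.

From Stdlib Require Import Reals Lra Lia Psatz ZArith.
Open Scope R_scope.

(* Let [m = ceil E(H)], [A = P(H >= m)] and [psi = E((H - E H) 1_{H >= m})].  The recurrence
   [(j + 1) (n - i - k + j + 1) p(j + 1) = (i - j) (k - j) p(j)] gives [psi = m (n - i - k + m) p(m) / n]
   and a closed form of the truncated second moment, so Cauchy-Schwarz yields
   [psi ^ 2 <= A (Var(H) A + psi)], i.e. [psi <= A (1 + sd(H))].  Conversely
   [psi >= (n - 1) / n Var(H) P] with [P = max(p(m - 1), p(m))], the mode of the unimodal law.
   Finally a law whose point masses are at most [P] has second moment about an integer [c]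
   at least [J ^ 2 - P J (4 J ^ 2 - 1) / 3] for every [J >= 1]; choosing [J ~ sd(H)] bounds
   [sd(H) P] from below, and the three estimates combine into the claim. *)

Lemma binom_0_r a : binom a 0 = 1%nat.
Proof. now destruct a. Qed.

Lemma binom_eq_0 a b : (a < b)%nat -> binom a b = 0%nat.
Proof.
  revert b; induction a as [|a IH]; intros [|b] Hab; cbn [binom]; try lia.
  rewrite !IH by lia; reflexivity.
Qed.

Lemma binom_pos a b : (b <= a)%nat -> (0 < binom a b)%nat.
Proof.
  revert b; induction a as [|a IH]; intros [|b] Hba; cbn [binom]; try lia.
  specialize (IH b ltac:(lia)); lia.
Qed.

Lemma binom_absorption a j :
  INR (S j) * INR (binom a (S j)) = (INR a - INR j) * INR (binom a j).
Proof.
  revert j; induction a as [|a IH]; intros j.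
  - destruct j; cbn [binom]; simpl; lra.
  - destruct j as [|j]; cbn [binom]; rewrite ?binom_0_r, !plus_INR.
    + specialize (IH 0%nat); rewrite binom_0_r in IH.
      rewrite !S_INR in *; simpl INR in *; lra.
    + pose proof (IH j); pose proof (IH (S j)); rewrite !S_INR in *; nra.
Qed.

Lemma vandermonde a b k :
  sum_f_R0 (fun j => INR (binom a j) * INR (binom b (k - j))) k = INR (binom (a + b) k).
Proof.
  revert b k; induction a as [|a IH]; intros b k.
  - destruct k as [|k]; [simpl; rewrite binom_0_r; simpl; ring|].
    rewrite decomp_sum by lia; simpl pred; rewrite Nat.sub_0_r, binom_0_r, sum_eq_R0.
    + simpl; ring.
    + intros j _; cbn [binom]; simpl INR; ring.
  - destruct k as [|k]; [simpl; rewrite !binom_0_r; simpl; ring|].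
    rewrite decomp_sum by lia; simpl pred; rewrite binom_0_r, Nat.sub_0_r.
    assert (Hsplit :
      sum_f_R0 (fun j => INR (binom (S a) (S j)) * INR (binom b (S k - S j))) k
      = sum_f_R0 (fun j => INR (binom a j) * INR (binom b (k - j))) k
        + sum_f_R0 (fun j => INR (binom a (S j)) * INR (binom b (S k - S j))) k).
    { rewrite <- sum_plus; apply sum_eq; intros j _; cbn [binom].
      replace (S k - S j)%nat with (k - j)%nat by lia; rewrite plus_INR; ring. }
    pose proof (IH b (S k)) as IHS.
    rewrite decomp_sum in IHS by lia; simpl pred in IHS; rewrite binom_0_r, Nat.sub_0_r in IHS.
    rewrite Hsplit, IH; replace (S a + b)%nat with (S (a + b)) by lia.
    cbn [binom]; rewrite plus_INR; simpl INR in *; lra.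
Qed.

Definition tail_sum (N j : nat) (f : nat -> R) : R :=
  sum_f_R0 (fun l => if (j <=? l)%nat then f l else 0) N.

Lemma tail_sum_0 N f : tail_sum N 0 f = sum_f_R0 f N.
Proof. reflexivity. Qed.

Lemma tail_sum_S N j f :
  tail_sum N j f = (if (j <=? N)%nat then f j else 0) + tail_sum N (S j) f.
Proof.
  unfold tail_sum; induction N as [|N IH]; simpl sum_f_R0.
  - destruct j; simpl; ring.
  - rewrite IH; simpl Nat.leb.
    destruct (Nat.leb_spec j N), (Nat.leb_spec j (S N)); try lia; try ring.
    replace j with (S N) by lia; ring.
Qed.

Lemma tail_sum_beyond N j f : (N < j)%nat -> tail_sum N j f = 0.
Proof.
  intros HNj; unfold tail_sum; induction N as [|N IH]; simpl.
  - now rewrite (proj2 (Nat.leb_gt j 0) HNj).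
  - rewrite IH, (proj2 (Nat.leb_gt j (S N))) by lia; ring.
Qed.

Lemma tail_sum_ext N j f g : (forall l, f l = g l) -> tail_sum N j f = tail_sum N j g.
Proof. intros Hfg; apply sum_eq; intros l _; now rewrite Hfg. Qed.

Lemma tail_sum_plus N j f g :
  tail_sum N j (fun l => f l + g l) = tail_sum N j f + tail_sum N j g.
Proof.
  unfold tail_sum; rewrite <- sum_plus; apply sum_eq; intros l _.
  destruct (j <=? l)%nat; ring.
Qed.

Lemma tail_sum_scal N j a f : tail_sum N j (fun l => a * f l) = a * tail_sum N j f.
Proof.
  unfold tail_sum; rewrite scal_sum; apply sum_eq; intros l _.
  destruct (j <=? l)%nat; ring.
Qed.

Lemma tail_sum_nonneg N j f : (forall l, 0 <= f l) -> 0 <= tail_sum N j f.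
Proof.
  intros Hf; apply cond_pos_sum; intros l; cbv beta; destruct (j <=? l)%nat; [apply Hf | lra].
Qed.

Lemma tail_sum_cauchy_schwarz N j (p x : nat -> R) :
  (forall l, 0 <= p l) -> 0 < tail_sum N j p ->
  (tail_sum N j (fun l => x l * p l)) ^ 2
  <= tail_sum N j p * tail_sum N j (fun l => x l ^ 2 * p l).
Proof.
  intros Hp HA.
  set (A := tail_sum N j p) in *; set (B := tail_sum N j (fun l => x l * p l));
    set (C := tail_sum N j (fun l => x l ^ 2 * p l)); set (t := B / A).
  assert (Hsq : 0 <= tail_sum N j (fun l => (x l - t) ^ 2 * p l)).
  { apply tail_sum_nonneg; intros l; apply Rmult_le_pos; [apply pow2_ge_0 | apply Hp]. }
  rewrite (tail_sum_ext _ _ _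
    (fun l => x l ^ 2 * p l + ((-2 * t) * (x l * p l) + t ^ 2 * p l))) in Hsq
    by (intros; ring).
  rewrite !tail_sum_plus, !tail_sum_scal in Hsq; fold A B C in Hsq.
  assert (0 <= A * (C + (-2 * t * B + t ^ 2 * A))) by (apply Rmult_le_pos; lra).
  replace (A * (C + (-2 * t * B + t ^ 2 * A))) with (A * C - B ^ 2) in * by (unfold t; field; lra).
  lra.
Qed.

Lemma nat_down_ind (N : nat) (P : nat -> Prop) :
  (forall j, (N < j)%nat -> P j) -> (forall j, (j <= N)%nat -> P (S j) -> P j) ->
  forall j, P j.
Proof.
  intros Hbeyond Hstep.
  assert (Hd : forall d j, (j + d = S N)%nat -> P j).
  { induction d as [|d IH]; intros j Hj; [apply Hbeyond; lia|].
    apply Hstep; [lia|]; apply IH; lia. }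
  intros j; destruct (le_lt_dec j N); [apply (Hd (S N - j)%nat); lia | apply Hbeyond; lia].
Qed.

Lemma le_from_nonincreasing (f : nat -> R) m :
  (forall l, (m <= l)%nat -> f (S l) <= f l) -> forall l, (m <= l)%nat -> f l <= f m.
Proof.
  intros Hdec l Hl; induction Hl as [|l Hl IH]; [lra|].
  apply Rle_trans with (f l); [apply Hdec, Hl | exact IH].
Qed.

Lemma le_from_nondecreasing (f : nat -> R) m :
  (forall l, (S l <= m)%nat -> f l <= f (S l)) -> forall l, (l <= m)%nat -> f l <= f m.
Proof.
  intros Hinc l Hl; revert Hinc; induction Hl as [|m Hl IH]; intros Hinc; [lra|].
  apply Rle_trans with (f m); [apply IH; intros; apply Hinc; lia | apply Hinc; lia].
Qed.

Section Hypergeometric.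

Variables n i k : nat.
Hypotheses (Hn : (1 <= n)%nat) (Hin : (i <= n)%nat) (Hkn : (k <= n)%nat).

Local Notation p := (hyp_pmf n i k).
Local Notation mu := (INR i * INR k / INR n).

Let Hn0 : 0 < INR n.
Proof. apply lt_0_INR; lia. Qed.

Let mu_mul_n : mu * INR n = INR i * INR k.
Proof. field; lra. Qed.

Let mu_nonneg : 0 <= mu.
Proof.
  apply Rmult_le_pos; [apply Rmult_le_pos; apply pos_INR | left; apply Rinv_0_lt_compat, Hn0].
Qed.

Let mu_le_i : mu <= INR i.
Proof.
  apply Rmult_le_reg_r with (INR n); [exact Hn0|]; rewrite mu_mul_n.
  apply Rmult_le_compat_l; [apply pos_INR | apply le_INR, Hkn].
Qed.

Let mu_le_k : mu <= INR k.
Proof.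
  apply Rmult_le_reg_r with (INR n); [exact Hn0|]; rewrite mu_mul_n, Rmult_comm.
  apply Rmult_le_compat_l; [apply pos_INR | apply le_INR, Hin].
Qed.

Let binom_n_k_pos : 0 < INR (binom n k).
Proof. apply lt_0_INR, binom_pos, Hkn. Qed.

Lemma hyp_pmf_nonneg j : 0 <= p j.
Proof.
  unfold hyp_pmf; destruct (j <=? k)%nat; [|lra].
  apply Rmult_le_pos; [apply Rmult_le_pos; apply pos_INR|].
  left; apply Rinv_0_lt_compat, binom_n_k_pos.
Qed.

Lemma hyp_pmf_out j : (k < j)%nat -> p j = 0.
Proof. intros Hkj; unfold hyp_pmf; now rewrite (proj2 (Nat.leb_gt j k) Hkj). Qed.

Lemma hyp_pmf_pos j : (j <= i)%nat -> (j <= k)%nat -> (k - j <= n - i)%nat -> 0 < p j.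
Proof.
  intros Hji Hjk Hkj; unfold hyp_pmf; rewrite (proj2 (Nat.leb_le j k) Hjk).
  apply Rdiv_lt_0_compat; [|apply binom_n_k_pos].
  apply Rmult_lt_0_compat; apply lt_0_INR, binom_pos; assumption.
Qed.

Lemma hyp_pmf_sum : sum_f_R0 p k = 1.
Proof.
  rewrite (sum_eq _ (fun j => INR (binom i j) * INR (binom (n - i) (k - j)) * / INR (binom n k))).
  - rewrite <- scal_sum, vandermonde; replace (i + (n - i))%nat with n by lia.
    field; lra.
  - intros j Hj; unfold hyp_pmf; now rewrite (proj2 (Nat.leb_le j k) Hj).
Qed.

Lemma hyp_pmf_succ j :
  INR (S j) * (INR n - INR i - INR k + INR (S j)) * p (S j)
  = (INR i - INR j) * (INR k - INR j) * p j.
Proof.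
  destruct (le_lt_dec k j) as [Hkj|Hjk].
  - rewrite (hyp_pmf_out (S j)) by lia.
    destruct (Nat.eq_dec j k) as [->|Hne]; [ring|].
    rewrite (hyp_pmf_out j) by lia; ring.
  - unfold hyp_pmf; rewrite (proj2 (Nat.leb_le (S j) k) Hjk), (proj2 (Nat.leb_le j k)) by lia.
    set (r := (k - S j)%nat); replace (k - j)%nat with (S r) by (unfold r; lia).
    assert (Hr : INR r = INR k - INR (S j)) by (unfold r; rewrite minus_INR by lia; ring).
    pose proof (binom_absorption i j) as Hi_abs.
    pose proof (binom_absorption (n - i) r) as Hni_abs.
    rewrite minus_INR, Hr in Hni_abs by lia; rewrite S_INR, Hr in Hni_abs.
    rewrite S_INR in *.
    apply Rmult_eq_reg_r with (INR (binom n k)); [|lra].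
    unfold Rdiv; rewrite !Rmult_assoc, !Rinv_l by lra; rewrite !Rmult_1_r.
    transitivity ((INR j + 1) * INR (binom i (S j))
                  * ((INR n - INR i - (INR k - (INR j + 1))) * INR (binom (n - i) r))); [ring|].
    rewrite Hi_abs, <- Hni_abs; ring.
Qed.

Lemma tail_first_moment j :
  tail_sum k j (fun l => (INR l - mu) * p l)
  = INR j * (INR n - INR i - INR k + INR j) * p j / INR n.
Proof.
  revert j; apply (nat_down_ind k).
  - intros j Hj; rewrite tail_sum_beyond, hyp_pmf_out by lia; field; lra.
  - intros j Hj IH; rewrite tail_sum_S, (proj2 (Nat.leb_le j k) Hj), IH.
    rewrite hyp_pmf_succ; field; lra.
Qed.

Lemma hyp_mean_eq : hyp_mean n i k = mu.
Proof.
  pose proof (tail_first_moment 0) as H0; rewrite tail_sum_0 in H0; simpl INR in H0.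
  rewrite (sum_eq _ (fun l => INR l * p l + p l * (- mu))) in H0 by (intros; ring).
  rewrite sum_plus, <- scal_sum, hyp_pmf_sum in H0.
  unfold hyp_mean; lra.
Qed.

Lemma tail_second_moment (Hn2 : (2 <= n)%nat) j :
  tail_sum k j (fun l => (INR l - mu) ^ 2 * p l) =
  mu * (mu + (INR n - INR i - INR k)) / (INR n - 1) * tail_sum k j p
  + tail_sum k j (fun l => (INR l - mu) * p l)
    * ((INR n * (INR j - mu - 1) + 2 * mu + (INR n - INR i - INR k)) / (INR n - 1)).
Proof.
  assert (Hn1 : 1 < INR n) by (apply (lt_INR 1); lia).
  revert j; apply (nat_down_ind k).
  - intros j Hj; rewrite !tail_sum_beyond by lia; ring.
  - intros j Hj IH; rewrite !(tail_sum_S k j), (proj2 (Nat.leb_le j k) Hj), IH.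
    rewrite (tail_first_moment (S j)), hyp_pmf_succ, S_INR; field; lra.
Qed.

Lemma hyp_var_eq (Hn2 : (2 <= n)%nat) :
  hyp_var n i k = mu * (mu + (INR n - INR i - INR k)) / (INR n - 1).
Proof.
  pose proof (tail_second_moment Hn2 0) as H; pose proof (tail_first_moment 0) as H0.
  rewrite !tail_sum_0, hyp_pmf_sum in *; simpl INR in *.
  unfold hyp_var; rewrite hyp_mean_eq, H, H0; field.
  assert (1 < INR n) by (apply (lt_INR 1); lia); lra.
Qed.

Lemma hyp_second_moment_about c :
  sum_f_R0 (fun l => p l * (INR l - c) ^ 2) k = hyp_var n i k + (mu - c) ^ 2.
Proof.
  pose proof (tail_first_moment 0) as H0; rewrite tail_sum_0 in H0; simpl INR in H0.
  rewrite (sum_eq _ (fun l => (INR l - mu) ^ 2 * p l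
      + ((INR l - mu) * p l * (2 * (mu - c)) + p l * (mu - c) ^ 2))) by (intros; ring).
  rewrite !sum_plus, <- !scal_sum, H0, hyp_pmf_sum.
  unfold hyp_var; rewrite hyp_mean_eq; field; lra.
Qed.

Lemma hyp_pmf_succ_le l :
  0 < INR n - INR i - INR k + mu -> mu <= INR l -> p (S l) <= p l.
Proof.
  intros Hd Hl.
  pose proof mu_mul_n; pose proof mu_nonneg.
  set (D := INR (S l) * (INR n - INR i - INR k + INR (S l))).
  assert (HD : 0 < D) by (unfold D; rewrite S_INR; pose proof (pos_INR l); apply Rmult_lt_0_compat; lra).
  assert (Hratio : (INR i - INR l) * (INR k - INR l) <= D).
  { unfold D; rewrite S_INR.
    assert (0 <= (INR l - mu) * (INR n + 2)) by (apply Rmult_le_pos; lra). nra. }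
  apply Rmult_le_reg_l with D; [exact HD|].
  unfold D; rewrite hyp_pmf_succ.
  apply Rmult_le_compat_r; [apply hyp_pmf_nonneg | exact Hratio].
Qed.

Lemma hyp_pmf_le_succ l : INR (S l) <= mu -> p l <= p (S l).
Proof.
  intros Hl.
  destruct (le_lt_dec (k - l) (n - i)) as [Hkl|Hkl].
  2:{ unfold hyp_pmf at 1; rewrite (binom_eq_0 (n - i) (k - l)) by lia; simpl INR.
      destruct (l <=? k)%nat; [|apply hyp_pmf_nonneg].
      unfold Rdiv; rewrite Rmult_0_r, Rmult_0_l; apply hyp_pmf_nonneg. }
  destruct (le_lt_dec l k) as [Hlk|Hlk].
  2:{ rewrite hyp_pmf_out by lia; apply hyp_pmf_nonneg. }
  pose proof mu_mul_n; pose proof mu_le_i; pose proof mu_le_k.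
  assert (Hkl' : INR k - INR l <= INR n - INR i)
    by (rewrite <- !minus_INR by lia; apply le_INR; lia).
  rewrite S_INR in Hl.
  set (D := INR (S l) * (INR n - INR i - INR k + INR (S l))).
  assert (HD : 0 < D) by (unfold D; rewrite S_INR; pose proof (pos_INR l); apply Rmult_lt_0_compat; lra).
  assert (Hratio : D <= (INR i - INR l) * (INR k - INR l)).
  { unfold D; rewrite S_INR.
    assert (0 <= (mu - (INR l + 1)) * (INR n + 2)) by (apply Rmult_le_pos; lra). nra. }
  apply Rmult_le_reg_l with D; [exact HD|].
  unfold D at 2; rewrite hyp_pmf_succ.
  apply Rmult_le_compat_r; [apply hyp_pmf_nonneg | exact Hratio].
Qed.

Lemma hyp_pmf_le_mode m :
  (1 <= m)%nat -> INR m - 1 < mu <= INR m -> 0 < INR n - INR i - INR k + mu ->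
  forall l, p l <= Rmax (p (m - 1)) (p m).
Proof.
  intros Hm [Hm1 Hm2] Hd l.
  destruct (le_lt_dec m l) as [Hml|Hlm].
  - apply Rle_trans with (p m); [|apply Rmax_r].
    apply (le_from_nonincreasing p m); [|exact Hml].
    intros l' Hl'; apply hyp_pmf_succ_le; [exact Hd|].
    apply Rle_trans with (INR m); [exact Hm2 | apply le_INR, Hl'].
  - apply Rle_trans with (p (m - 1)); [|apply Rmax_l].
    apply (le_from_nondecreasing p (m - 1)); [|lia].
    intros l' Hl'; apply hyp_pmf_le_succ.
    apply le_INR in Hl'; rewrite minus_INR in Hl' by lia; change (INR 1) with 1 in Hl'; lra.
Qed.

End Hypergeometric.

Lemma sum_f_R0_telescope (F : nat -> R) N :
  sum_f_R0 (fun l => F (S l) - F l) N = F (S N) - F 0%nat.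
Proof. induction N as [|N IH]; simpl; [ring | rewrite IH; ring]. Qed.

Definition sum_sq (x : R) : R := x * (x + 1) * (2 * x + 1) / 6.

(* For integers [1 - J <= t], [window J t] is the sum of [J ^ 2 - s ^ 2] over [1 - J <= s < t]. *)
Definition window (J t : R) : R := (t + J - 1) * J ^ 2 - sum_sq (t - 1) + sum_sq (- J).

Definition clamp (J x : R) : R := Rmax (1 - J) (Rmin x J).

Definition clamped_window (J c l : nat) : R := window (INR J) (clamp (INR J) (INR l - INR c)).

Lemma window_succ J t : window J (t + 1) - window J t = J ^ 2 - t ^ 2.
Proof. unfold window, sum_sq; field. Qed.

Lemma window_total J : window J J - window J (1 - J) = J * (4 * J ^ 2 - 1) / 3.
Proof. unfold window, sum_sq; field. Qed.

Lemma window_mono J a b :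
  1 <= J -> 1 - J <= a -> a <= b -> b <= J -> window J a <= window J b.
Proof.
  intros HJ Ha Hab Hb.
  set (Q := 2 * ((a - 1) ^ 2 + (a - 1) * (b - 1) + (b - 1) ^ 2) + 3 * ((a - 1) + (b - 1)) + 1).
  assert (Hdiff : window J b - window J a = (b - a) * (J ^ 2 - Q / 6))
    by (unfold window, sum_sq, Q; field).
  assert (HQ : Q <= 6 * J ^ 2) by (unfold Q; nra).
  assert (0 <= (b - a) * (J ^ 2 - Q / 6)) by (apply Rmult_le_pos; lra).
  lra.
Qed.

Lemma clamp_range J x : 1 <= J -> 1 - J <= clamp J x <= J.
Proof.
  intros HJ; unfold clamp; split; [apply Rmax_l|].
  apply Rmax_lub; [lra | apply Rmin_r].
Qed.

Lemma clamped_window_step J c l : (1 <= J)%nat ->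
  0 <= clamped_window J c (S l) - clamped_window J c l /\
  INR J ^ 2 - (INR l - INR c) ^ 2 <= clamped_window J c (S l) - clamped_window J c l.
Proof.
  intros HJ; assert (HJr : 1 <= INR J) by (apply (le_INR 1); exact HJ).
  unfold clamped_window; rewrite S_INR.
  replace (INR l + 1 - INR c) with ((INR l - INR c) + 1) by ring.
  set (x := INR l - INR c).
  destruct (le_lt_dec (l + J) c) as [Hlow|Hlow]; [|destruct (le_lt_dec (c + J) l) as [Hhigh|Hhigh]].
  - apply le_INR in Hlow; rewrite plus_INR in Hlow.
    unfold clamp; rewrite (Rmin_left x), (Rmin_left (x + 1)), (Rmax_left _ x), (Rmax_left _ (x + 1))
      by (unfold x; lra).
    split; [lra|]; unfold x; nra.
  - apply le_INR in Hhigh; rewrite plus_INR in Hhigh.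
    unfold clamp; rewrite (Rmin_right x), (Rmin_right (x + 1)), (Rmax_right _ (INR J))
      by (unfold x; lra).
    split; [lra|]; unfold x; nra.
  - assert (Hx : 1 - INR J <= x <= INR J - 1).
    { assert (INR (c + 1) <= INR (l + J)) by (apply le_INR; lia).
      assert (INR (l + 1) <= INR (c + J)) by (apply le_INR; lia).
      rewrite !plus_INR in *; simpl INR in *; unfold x; lra. }
    unfold clamp; rewrite (Rmin_left x), (Rmin_left (x + 1)), (Rmax_right _ x), (Rmax_right _ (x + 1))
      by lra.
    rewrite window_succ; split; [|lra].
    assert (x ^ 2 <= INR J ^ 2) by nra; lra.
Qed.

(* Pointwise [(l - c) ^ 2 >= J ^ 2 - (J ^ 2 - (l - c) ^ 2)^+]; the increments of
   [clamped_window] dominate these positive parts and telescope to at most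
   [J (4 J ^ 2 - 1) / 3], their sum over all integers [l]. *)
Lemma sum_sq_dist_lower_bound (p : nat -> R) (N c J : nat) (P : R) :
  (1 <= J)%nat -> (forall l, 0 <= p l) -> (forall l, p l <= P) ->
  INR J ^ 2 * sum_f_R0 p N - P * (INR J * (4 * INR J ^ 2 - 1) / 3)
  <= sum_f_R0 (fun l => p l * (INR l - INR c) ^ 2) N.
Proof.
  intros HJ Hp HP.
  assert (HJr : 1 <= INR J) by (apply (le_INR 1); exact HJ).
  set (F := clamped_window J c).
  assert (Htotal : F (S N) - F 0%nat <= INR J * (4 * INR J ^ 2 - 1) / 3).
  { rewrite <- window_total; unfold F, clamped_window.
    destruct (clamp_range (INR J) (INR (S N) - INR c) HJr).
    destruct (clamp_range (INR J) (INR 0 - INR c) HJr).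
    assert (window (INR J) (clamp (INR J) (INR (S N) - INR c)) <= window (INR J) (INR J))
      by (apply window_mono; lra).
    assert (window (INR J) (1 - INR J) <= window (INR J) (clamp (INR J) (INR 0 - INR c)))
      by (apply window_mono; lra).
    lra. }
  assert (HP0 : 0 <= P) by (apply Rle_trans with (p 0%nat); [apply Hp | apply HP]).
  apply Rle_trans with (sum_f_R0 (fun l => p l * INR J ^ 2 + (F (S l) - F l) * - P) N).
  - rewrite sum_plus, <- !scal_sum, sum_f_R0_telescope.
    assert (P * (F (S N) - F 0%nat) <= P * (INR J * (4 * INR J ^ 2 - 1) / 3))
      by (apply Rmult_le_compat_l; assumption).
    lra.
  - apply sum_Rle; intros l _.
    destruct (clamped_window_step J c l HJ) as [Hstep_pos Hstep].
    specialize (Hp l); specialize (HP l); fold F in Hstep_pos, Hstep.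
    nra.
Qed.

Lemma nat_ceil_exists (x : R) : 0 < x -> exists m : nat, INR m - 1 < x <= INR m.
Proof.
  intros Hx; destruct (archimed x) as [Hup1 Hup2].
  assert (Hz : (0 < up x)%Z) by (apply lt_IZR; simpl; lra).
  destruct (Rle_lt_or_eq_dec (IZR (up x) - 1) x ltac:(lra)) as [Hlt|Heq].
  - exists (Z.to_nat (up x)); rewrite INR_IZR_INZ, Z2Nat.id by lia; lra.
  - exists (Z.to_nat (up x - 1)); rewrite INR_IZR_INZ, Z2Nat.id, minus_IZR by lia; simpl; lra.
Qed.

Lemma tail_mass_ge A psi sg :
  0 < A -> 0 <= psi -> 0 <= sg -> psi ^ 2 <= A * (sg ^ 2 * A + psi) -> psi <= A * (1 + sg).
Proof.
  intros HA Hpsi Hsg Hquad.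
  destruct (Rle_lt_dec psi (A * (1 + sg))) as [Hle|Hgt]; [exact Hle|].
  assert (A * sg * (psi - A * (1 + sg)) >= 0) by (apply Rle_ge, Rmult_le_pos; nra).
  nra.
Qed.

Lemma mode_mass_small_var sg P :
  1/3 <= sg ^ 2 -> 0 <= sg <= 1 -> 4 - 10 * P <= sg ^ 2 + 1/4 ->
  193/1000 * (1 + sg) <= 2 * sg * P.
Proof.
  intros Hvar Hsg HP.
  assert (1/2 <= sg) by nra.
  assert (sg * sg ^ 2 <= sg) by nra.
  nra.
Qed.

(* [7/4] approximates [sqrt 3], the asymptotically optimal ratio [J / sg]. *)
Lemma mode_mass_large_var sg P J :
  1 <= sg -> J - 1 < 7/4 * sg <= J -> 0 <= P ->
  J ^ 2 - P * (J * (4 * J ^ 2 - 1) / 3) <= sg ^ 2 + 1/4 -> 193/1000 <= sg * P.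
Proof.
  intros Hsg [HJ1 HJ2] HP HJ.
  set (u := J - 7/4 * sg); assert (Hu : 0 <= u < 1) by (unfold u; lra).
  replace J with (7/4 * sg + u) in * by (unfold u; ring).
  assert (Hw : 0 < (7/4 * sg + u) * (4 * (7/4 * sg + u) ^ 2 - 1))
    by (apply Rmult_lt_0_compat; nra).
  assert (Hpoly : 193/1000 * ((7/4 * sg + u) * (4 * (7/4 * sg + u) ^ 2 - 1))
                  <= 3 * sg * ((7/4 * sg + u) ^ 2 - sg ^ 2 - 1/4)).
  { assert (0 <= sg * u * (sg - u)) by (apply Rmult_le_pos; [apply Rmult_le_pos|]; lra).
    assert (0 <= u * (sg * sg - u * u)) by (apply Rmult_le_pos; nra).
    assert (0 <= sg * (sg * sg - 1)) by (apply Rmult_le_pos; nra).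
    assert (0 <= sg * sg * u) by (apply Rmult_le_pos; nra).
    nra. }
  assert (3 * sg * ((7/4 * sg + u) ^ 2 - sg ^ 2 - 1/4)
          <= sg * P * ((7/4 * sg + u) * (4 * (7/4 * sg + u) ^ 2 - 1))) by nra.
  nra.
Qed.

Lemma mode_mass_bound var P :
  1/3 <= var -> 0 <= P ->
  (forall J : nat, (1 <= J)%nat -> INR J ^ 2 - P * (INR J * (4 * INR J ^ 2 - 1) / 3) <= var + 1/4) ->
  193/1000 * (1 + sqrt var) <= sqrt var * P * (1 + sqrt (1 + var)).
Proof.
  intros Hvar HP HJ.
  set (sg := sqrt var); set (R1 := sqrt (1 + var)).
  assert (Hsg2 : sg ^ 2 = var) by (unfold sg; rewrite pow2_sqrt by lra; reflexivity).
  assert (Hsg0 : 0 <= sg) by apply sqrt_pos.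
  assert (HR1 : sg <= R1 /\ 1 <= R1).
  { unfold sg, R1; split; [apply sqrt_le_1_alt; lra|].
    apply Rle_trans with (sqrt 1); [rewrite sqrt_1; lra | apply sqrt_le_1_alt; lra]. }
  assert (0 <= sg * P) by (apply Rmult_le_pos; lra).
  destruct (Rle_lt_dec sg 1) as [Hsmall|Hlarge].
  - pose proof (HJ 2%nat ltac:(lia)) as HJ2; simpl INR in HJ2.
    assert (193/1000 * (1 + sg) <= 2 * sg * P) by (apply mode_mass_small_var; lra).
    nra.
  - destruct (nat_ceil_exists (7/4 * sg) ltac:(lra)) as [J HJsg].
    assert (HJ1 : (1 <= J)%nat) by (destruct J; [simpl in HJsg; lra | lia]).
    assert (193/1000 <= sg * P)
      by (apply (mode_mass_large_var sg P (INR J)); [lra | lra | lra | rewrite Hsg2; apply HJ, HJ1]).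
    nra.
Qed.

Lemma prefactor_range : 0 <= exp (-(1/8)) / (4 * sqrt 2) <= 177/1000.
Proof.
  assert (Hexp : 0 < exp (-(1/8)) <= 1).
  { pose proof (exp_increasing (-(1/8)) 0 ltac:(lra)); pose proof (exp_pos (-(1/8))).
    rewrite exp_0 in *; lra. }
  assert (Hsqrt2 : 1414/1000 <= sqrt 2).
  { rewrite <- (sqrt_pow2 (1414/1000)) by lra; apply sqrt_le_1_alt; lra. }
  split; [apply Rmult_le_pos; [lra | left; apply Rinv_0_lt_compat; lra]|].
  apply Rmult_le_reg_r with (4 * sqrt 2); [lra|].
  replace (exp (-(1/8)) / (4 * sqrt 2) * (4 * sqrt 2)) with (exp (-(1/8))) by (field; lra).
  lra.
Qed.

Lemma sqrt_ratio_range nn : 7 <= nn -> 92/100 <= sqrt ((nn - 1) / nn) <= 1.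
Proof.
  intros Hnn.
  assert (Hratio : 6/7 <= (nn - 1) / nn <= 1).
  { replace ((nn - 1) / nn) with (1 - / nn) by (field; lra).
    assert (/ nn <= / 7) by (apply Rinv_le_contravar; lra).
    assert (0 < / nn) by (apply Rinv_0_lt_compat; lra).
    lra. }
  split.
  - rewrite <- (sqrt_pow2 (92/100)) by lra; apply sqrt_le_1_alt; lra.
  - apply Rle_trans with (sqrt 1); [apply sqrt_le_1_alt; lra | rewrite sqrt_1; lra].
Qed.

Lemma sqrt_one_plus_range v c : 0 <= v -> 1 <= c -> 1 <= sqrt (1 + v) <= sqrt (1 + c * v).
Proof.
  intros Hv Hc; split.
  - apply Rle_trans with (sqrt 1); [rewrite sqrt_1; lra | apply sqrt_le_1_alt; lra].
  - apply sqrt_le_1_alt; nra.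
Qed.

(* [A] stands for the tail mass above the mean, [psi] for the tail of the first central
   moment and [P] for the mode of the distribution. *)
Lemma tail_bound_of_moment_bounds A psi var P nn kk :
  7 <= nn -> 1 <= kk < nn -> 1/3 <= var -> 0 < A -> 0 <= P ->
  psi <= A * (1 + sqrt var) ->
  (nn - 1) * var * P <= psi * nn ->
  193/1000 * (1 + sqrt var) <= sqrt var * P * (1 + sqrt (1 + var)) ->
  exp (-(1/8)) / (4 * sqrt 2) * sqrt ((nn - 1) / nn) *
    (sqrt var / (1 + sqrt (1 + (nn - 1) / (nn - kk) * var))) <= A.
Proof.
  intros Hnn Hkk Hvar HA HP Hupper Hlower Hmode.
  set (sg := sqrt var) in *; set (s := sqrt ((nn - 1) / nn)); set (K := exp (-(1/8)) / (4 * sqrt 2)).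
  set (R1 := sqrt (1 + var)) in *; set (Rc := sqrt (1 + (nn - 1) / (nn - kk) * var)).
  pose proof prefactor_range as HK; fold K in HK.
  pose proof (sqrt_ratio_range nn Hnn) as Hs; fold s in Hs.
  assert (Hsg2 : sg ^ 2 = var) by (unfold sg; apply pow2_sqrt; lra).
  assert (Hsg0 : 0 <= sg) by apply sqrt_pos.
  assert (Hs2 : s ^ 2 = (nn - 1) / nn)
    by (unfold s; apply pow2_sqrt, Rmult_le_pos; [lra | left; apply Rinv_0_lt_compat; lra]).
  assert (HR1 : 1 <= R1 <= Rc).
  { apply sqrt_one_plus_range; [lra|].
    apply Rmult_le_reg_r with (nn - kk); [lra|].
    replace ((nn - 1) / (nn - kk) * (nn - kk)) with (nn - 1) by (field; lra); lra. }
  assert (Hpsi : s ^ 2 * sg ^ 2 * P <= psi).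
  { apply Rmult_le_reg_r with nn; [lra|]; rewrite Hs2, Hsg2.
    replace ((nn - 1) / nn * var * P * nn) with ((nn - 1) * var * P) by (field; lra); lra. }
  assert (HA1 : 193/1000 * s ^ 2 * sg <= A * (1 + R1)).
  { apply Rmult_le_reg_r with (1 + sg); [lra|].
    assert (s ^ 2 * sg * (193/1000 * (1 + sg)) <= s ^ 2 * sg * (sg * P * (1 + R1)))
      by (apply Rmult_le_compat_l; [apply Rmult_le_pos; nra | exact Hmode]).
    assert (psi * (1 + R1) <= A * (1 + sg) * (1 + R1)) by (apply Rmult_le_compat_r; lra).
    assert (s ^ 2 * sg ^ 2 * P * (1 + R1) <= psi * (1 + R1)) by (apply Rmult_le_compat_r; lra).
    nra. }
  assert (HKs : K * s * sg <= 193/1000 * s ^ 2 * sg).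
  { assert (0 <= s * sg) by (apply Rmult_le_pos; lra).
    assert (K <= 193/1000 * s) by lra. nra. }
  assert (A * (1 + R1) <= A * (1 + Rc)) by (apply Rmult_le_compat_l; lra).
  replace (K * s * (sg / (1 + Rc))) with (K * s * sg / (1 + Rc)) by (field; lra).
  apply Rmult_le_reg_r with (1 + Rc); [lra|].
  replace (K * s * sg / (1 + Rc) * (1 + Rc)) with (K * s * sg) by (field; lra); lra.
Qed.

Section AboveMean.

Variables n i k m : nat.
Hypotheses (Hn : (1 <= n)%nat) (Hin : (i <= n)%nat) (Hkn : (k <= n)%nat).
Hypotheses (Hmu_ge : 1 <= hyp_mean n i k) (Hmu_le : hyp_mean n i k <= INR (Nat.min i k) - 2)
  (Hgap : INR (n - i) * INR (n - k) / INR n > 1).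

Local Notation p := (hyp_pmf n i k).
Local Notation mu := (INR i * INR k / INR n).
Local Notation var := (hyp_var n i k).
Local Notation A := (tail_sum k m p).
Local Notation psi := (tail_sum k m (fun l => (INR l - mu) * p l)).
Local Notation P := (Rmax (p (m - 1)) (p m)).

Let Hn0 : 0 < INR n.
Proof. apply lt_0_INR; lia. Qed.

Let mu_mul_n : mu * INR n = INR i * INR k.
Proof. field; lra. Qed.

Let mu_range : 1 <= mu /\ mu <= INR i - 2 /\ mu <= INR k - 2.
Proof.
  rewrite <- (hyp_mean_eq n i k) by assumption.
  assert (INR (Nat.min i k) <= INR i) by (apply le_INR; lia).
  assert (INR (Nat.min i k) <= INR k) by (apply le_INR; lia).
  lra.
Qed.

Let mu_gap : 1 < INR n - INR i - INR k + mu.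
Proof.
  replace (INR n - INR i - INR k + mu) with ((INR n - INR i) * (INR n - INR k) / INR n)
    by (field; lra).
  rewrite <- !minus_INR by assumption; lra.
Qed.

Let mu_product : (INR i - mu) * (INR k - mu) = mu * (INR n - INR i - INR k + mu).
Proof. nra. Qed.

Lemma above_mean_n_k_range : 7 <= INR n /\ 1 <= INR k < INR n.
Proof.
  destruct mu_range as (? & ? & ?); pose proof mu_gap.
  assert (INR 6 < INR n) as H6 by (simpl; lra); apply INR_lt in H6.
  apply (le_INR 7) in H6; simpl in H6; lra.
Qed.

Let Hn2 : (2 <= n)%nat.
Proof. destruct above_mean_n_k_range as [Hn7 _]; apply (INR_lt 1); simpl; lra. Qed.

Let var_eq : (INR n - 1) * var = (INR i - mu) * (INR k - mu).
Proof.
  assert (1 < INR n) by (apply (lt_INR 1); exact Hn2).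
  rewrite hyp_var_eq, mu_product by assumption; field; lra.
Qed.

Lemma hyp_var_ge : 1/3 <= var.
Proof.
  destruct mu_range as (? & ? & ?); pose proof mu_gap.
  assert (1 < INR n) by (apply (lt_INR 1); lia).
  pose proof mu_product.
  assert (0 <= (mu - 1) * (INR n - INR i - INR k + mu - 1)) by (apply Rmult_le_pos; lra).
  assert (0 <= (INR i - mu - 2) * (INR k - mu - 2)) by (apply Rmult_le_pos; lra).
  apply Rmult_le_reg_l with (INR n - 1); [lra|].
  rewrite var_eq; nra.
Qed.

Hypothesis Hm : INR m - 1 < hyp_mean n i k <= INR m.

Let m_ceil : INR m - 1 < mu <= INR m.
Proof. rewrite <- (hyp_mean_eq n i k) by assumption; exact Hm. Qed.

Let m_range : (1 <= m)%nat /\ (m <= i)%nat /\ (m <= k)%nat /\ (k - m <= n - i)%nat.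
Proof.
  destruct mu_range as (? & ? & ?); pose proof m_ceil; pose proof mu_gap.
  assert (INR m < INR i /\ INR m < INR k /\ INR k + INR i < INR n + INR m) as (Hi & Hk & Hki)
    by lra.
  apply INR_lt in Hi, Hk; rewrite <- !plus_INR in Hki; apply INR_lt in Hki.
  assert (INR 0 < INR m) as Hm0 by (simpl; lra); apply INR_lt in Hm0.
  lia.
Qed.

Lemma hyp_prob_ge_mean_tail : hyp_prob_ge_mean n i k = A.
Proof.
  apply sum_eq; intros l _.
  destruct (Rle_dec (hyp_mean n i k) (INR l)) as [Hl|Hl], (Nat.leb_spec m l) as [Hml|Hml];
    try reflexivity; exfalso.
  - apply (le_INR (S l)) in Hml; rewrite S_INR in Hml; lra.
  - apply Hl, Rle_trans with (INR m); [apply Hm | apply le_INR, Hml].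
Qed.

Lemma tail_mass_pos : 0 < A.
Proof.
  destruct m_range as (_ & Hmi & Hmk & Hkm).
  rewrite tail_sum_S, (proj2 (Nat.leb_le m k) Hmk).
  pose proof (hyp_pmf_pos n i k Hkn m Hmi Hmk Hkm).
  pose proof (tail_sum_nonneg k (S m) p (hyp_pmf_nonneg n i k Hkn)).
  lra.
Qed.

Lemma tail_first_moment_nonneg : 0 <= psi.
Proof.
  rewrite tail_first_moment by assumption.
  pose proof m_ceil; pose proof mu_gap; pose proof (hyp_pmf_nonneg n i k Hkn m).
  apply Rmult_le_pos; [|left; apply Rinv_0_lt_compat, Hn0].
  apply Rmult_le_pos; [apply Rmult_le_pos|]; lra.
Qed.

Lemma tail_first_moment_sq_le : psi ^ 2 <= A * (var * A + psi).
Proof.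
  pose proof tail_mass_pos; pose proof tail_first_moment_nonneg.
  pose proof (tail_sum_cauchy_schwarz k m p (fun l => INR l - mu)
    (hyp_pmf_nonneg n i k Hkn) tail_mass_pos) as Hcs; cbv beta in Hcs.
  rewrite (tail_second_moment n i k Hn Hin Hkn Hn2), <- hyp_var_eq in Hcs by assumption.
  set (theta := (INR n * (INR m - mu - 1) + 2 * mu + (INR n - INR i - INR k)) / (INR n - 1)) in Hcs.
  assert (Htheta : theta <= 1).
  { destruct mu_range as (? & ? & ?); pose proof m_ceil.
    assert (1 < INR n) by (apply (lt_INR 1); lia).
    apply Rmult_le_reg_r with (INR n - 1); [lra|].
    unfold theta; replace (_ / (INR n - 1) * (INR n - 1))
      with (INR n * (INR m - mu - 1) + 2 * mu + (INR n - INR i - INR k)) by (field; lra).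
    nra. }
  assert (psi * theta <= psi) by nra.
  nra.
Qed.

Lemma tail_first_moment_ge_mode : (INR n - 1) * var * P <= psi * INR n.
Proof.
  destruct mu_range as (? & ? & ?); pose proof m_ceil; pose proof mu_gap.
  destruct m_range as (Hm1 & _).
  rewrite var_eq, tail_first_moment by assumption.
  replace (INR m * (INR n - INR i - INR k + INR m) * p m / INR n * INR n)
    with (INR m * (INR n - INR i - INR k + INR m) * p m) by (field; lra).
  apply Rmax_case.
  - pose proof (hyp_pmf_succ n i k Hn Hin Hkn (m - 1)) as Hsucc.
    replace (S (m - 1)) with m in Hsucc by lia; rewrite Hsucc, minus_INR in * by lia.
    change (INR 1) with 1 in *.
    apply Rmult_le_compat_r; [apply hyp_pmf_nonneg, Hkn | nra].
  - apply Rmult_le_compat_r; [apply hyp_pmf_nonneg, Hkn|].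
    rewrite mu_product; nra.
Qed.

Lemma hyp_spread_bound (J : nat) : (1 <= J)%nat ->
  INR J ^ 2 - P * (INR J * (4 * INR J ^ 2 - 1) / 3) <= var + 1/4.
Proof.
  intros HJ; pose proof m_ceil; pose proof mu_gap; destruct m_range as (Hm1 & _).
  assert (Hc : exists c : nat, (mu - INR c) ^ 2 <= 1/4).
  { destruct (Rle_dec mu (INR m - 1/2)).
    - exists (m - 1)%nat; rewrite minus_INR by lia; simpl INR; nra.
    - exists m; nra. }
  destruct Hc as [c Hc].
  pose proof (sum_sq_dist_lower_bound p k c J P HJ (hyp_pmf_nonneg n i k Hkn)
    (hyp_pmf_le_mode n i k Hn Hin Hkn m Hm1 m_ceil ltac:(lra))) as Hspread.
  rewrite hyp_pmf_sum, hyp_second_moment_about in Hspread by assumption.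
  lra.
Qed.

End AboveMean.

Theorem theorem2 (n i k : nat) :
  (1 <= n)%nat -> (1 <= i <= n)%nat -> (1 <= k <= n)%nat ->
  1 <= hyp_mean n i k ->
  hyp_mean n i k <= INR (Nat.min i k) - 2 ->
  INR (n - i) * INR (n - k) / INR n > 1 ->
  hyp_prob_ge_mean n i k >=
    exp (-(1/8)) / (4 * sqrt 2) * sqrt ((INR n - 1) / INR n) *
    (sqrt (hyp_var n i k) /
     (1 + sqrt (1 + (INR n - 1) / (INR n - INR k) * hyp_var n i k))).
Proof.
  intros Hn [_ Hin] [_ Hkn] Hmu_ge Hmu_le Hgap.
  destruct (nat_ceil_exists (hyp_mean n i k)) as [m Hm]; [lra|].
  set (psi := tail_sum k m (fun l => (INR l - INR i * INR k / INR n) * hyp_pmf n i k l)).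
  set (P := Rmax (hyp_pmf n i k (m - 1)) (hyp_pmf n i k m)).
  assert (HP : 0 <= P)
    by (apply Rle_trans with (hyp_pmf n i k m); [apply hyp_pmf_nonneg, Hkn | apply Rmax_r]).
  assert (Hvar : 1/3 <= hyp_var n i k) by (apply (hyp_var_ge n i k); assumption).
  assert (HA : 0 < tail_sum k m (hyp_pmf n i k)) by (apply (tail_mass_pos n i k m); assumption).
  assert (Hpsi : 0 <= psi) by (apply (tail_first_moment_nonneg n i k m); assumption).
  rewrite (hyp_prob_ge_mean_tail n i k m Hm); apply Rle_ge.
  apply (tail_bound_of_moment_bounds _ psi _ P); try assumption.
  - apply (above_mean_n_k_range n i k); assumption.
  - apply (above_mean_n_k_range n i k); assumption.
  - apply tail_mass_ge; [assumption | assumption | apply sqrt_pos |].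
    rewrite pow2_sqrt by lra; apply (tail_first_moment_sq_le n i k m); assumption.
  - apply (tail_first_moment_ge_mode n i k m); assumption.
  - apply mode_mass_bound; [assumption | assumption |].
    apply (hyp_spread_bound n i k m); assumption.
Qed.
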